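(* Let $L=10^6$, $\rho<L^{-16}$, and let $\xi=(\xi_i)_{i\in\mathbb{Z}}$ be i.i.d. with $\mathbb{P}(\xi_i\ge n)=\rho^n$ for $n\in\{0,1,2,\dots\}$. With $H_m,B_m$ defined below from $\xi$, let $p_{k,h,b}=\mathbb{P}[H_{(k,0)}=h,\,B_{(k,0)}=b]$. Then for every $k,b\ge0$ and $h\ge1$, $$p_{k,h,b}\le L^{-\left(k+\frac{h}{b+1}\right)-2h-13}.$$
   Context: Let $L_k=L^k$. For $k\ge0$ and $i\in\mathbb{Z}$ let $I_{(k,i)}=[iL_k,(i+1)L_k)\cap\mathbb{Z}$ and $M_k=\{k\}\times\mathbb{Z}$. For $m=(k+1,i)\in M_{k+1}$ let $\mathcal{Q}_m=\{(k,iL+j):0\le j\le L-1\}$. Define $H_m$ recursively: $H_{(0,i)}=\xi_i$; for $m\in M_{k+1}$, $H_m=0$ if every $m'\in\mathcal{Q}_m$ is good; $H_m=H_{m_1}-1$ if $m_1$ is the only bad element of $\mathcal{Q}_m$; $H_m=1+\sum_{i=1}^r H_{m_i}$ if $m_1,\dots,m_r$ with $r\ge2$ are the bad elements of $\mathcal{Q}_m$. Here $m$ is good if $H_m=0$ and bad otherwise. Define $B_m$ recursively: $B_{(0,i)}=0$; for $m\in M_{k+1}$, $B_m=0$ if $m$ is good; $B_m=B_{m'}$ if $m$ is bad and $m'$ is the only bad element of $\mathcal{Q}_m$; $B_m=k+1$ if $\mathcal{Q}_m$ contains more than one bad element. *)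

From HB Require Import structures.
From mathcomp Require Import all_boot all_order all_algebra.
From mathcomp Require Import all_classical all_reals all_analysis.
Set Implicit Arguments. Unset Strict Implicit. Unset Printing Implicit Defensive.
Import Order.TTheory GRing.Theory Num.Theory.

Definition Lpar : nat := 10 ^ 6.

(* HB Lb xi k i = (H_(k,i), B_(k,i)) computed from the environment xi,
   with blocks of size Lb: the children of (k+1,i) are (k, i*Lb + j), j < Lb. *)
Fixpoint HB (Lb : nat) (xi : int -> nat) (k : nat) (i : int) : int * nat :=
  match k with
  | 0 => (Posz (xi i), 0%N)
  | k'.+1 =>
      let ch := [seq HB Lb xi k' (i * Posz Lb + Posz j)%R | j <- iota 0 Lb] in
      let bad := [seq c <- ch | c.1 != 0%R] in
      let H : int :=
        match bad with
        | [::] => 0%R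
        | [:: c] => (c.1 - 1)%R
        | _ => (1 + \sum_(c <- bad) c.1)%R
        end in
      let B : nat :=
        if H == 0%R then 0%N
        else match bad with
             | [:: c] => c.2
             | _ => k'.+1
             end in
      (H, B)
  end.

Definition Hval (Lb : nat) (xi : int -> nat) (k : nat) (i : int) : int := (HB Lb xi k i).1.
Definition Bval (Lb : nat) (xi : int -> nat) (k : nat) (i : int) : nat := (HB Lb xi k i).2.

From HB Require Import structures.
From mathcomp Require Import all_boot all_order all_algebra.
From mathcomp Require Import all_classical all_reals all_analysis.
From mathcomp Require Import ring lra.
Set Implicit Arguments. Unset Strict Implicit. Unset Printing Implicit Defensive.
Import Order.TTheory GRing.Theory Num.Theory.
Local Open Scope classical_set_scope.
Local Open Scope ring_scope.

(* The event {H_(k,0) = h, B_(k,0) = b} is increasing in xi, so it is covered by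
   finitely many cylinders {xi_i >= n_i for all (i, n_i) in W}, where the
   "witnesses" W, supported on distinct sites, follow the recursion: a node with a
   single bad child is witnessed by that child with H one larger, a node with
   several bad children by witnesses for all of them.  By independence a cylinder
   has probability prod rho^n_i, and the total mass of the witnesses satisfies the
   bound by induction on k.  With one bad child, H + 1 gains a factor
   L^-(2 + 1/(b+1)), which pays for the L choices of the child and for the L^-1
   of level k + 1.  With several bad children, whose H-values sum to h - 1, the
   sum over these values is a convolution of geometric series; it is absorbed by
   the gap between L^-(2 + 1/(k+1)) per unit of H at level k and the
   L^-(2 + 1/(k+2)) required at level k + 1. *)

Definition witness := seq (nat * nat).

Definition exceeds (f : int -> nat) (W : witness) : bool :=
  all (fun p => p.2 <= f (Posz p.1))%N W.

Lemma exceeds_cat f W W' : exceeds f (W ++ W') = exceeds f W && exceeds f W'.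
Proof. exact: all_cat. Qed.

Fixpoint threshold (W : witness) (i : int) : nat :=
  if W is p :: W' then (if Posz p.1 == i then p.2 else threshold W' i) else 0%N.

Lemma thresholdE W p : uniq (unzip1 W) -> p \in W -> threshold W (Posz p.1) = p.2.
Proof.
elim: W => [|q W IH] //= /andP [qW uW]; rewrite inE => /orP [/eqP ->|pW].
  by rewrite eqxx.
case: eqP => [[qp]|_]; last exact: IH.
by move: qW; rewrite qp (map_f fst pW).
Qed.

Definition weight {R : pzSemiRingType} (rho : R) (W : witness) : R :=
  \prod_(p <- W) rho ^+ p.2.

Section Cylinders.
Context (R : realType) (d : measure_display) (T : measurableType d).
Variables (P : probability T R) (xi : int -> T -> nat).
Hypothesis xi_meas : forall (i : int) (A : set nat), measurable (xi i @^-1` A).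

Definition cylinder (W : witness) : set T := [set t | exceeds (xi^~ t) W].

Lemma measurable_cylinder W : measurable (cylinder W).
Proof.
elim: W => [|p W IH]; first by rewrite [cylinder _](_ : _ = setT) //; apply/seteqP.
rewrite [cylinder _](_ : _ = xi (Posz p.1) @^-1` [set n | (p.2 <= n)%N] `&` cylinder W).
  exact: measurableI.
by apply/seteqP; split => t /andP.
Qed.

Lemma measurable_finitely_determined (s : seq int) (F : (int -> nat) -> Prop) :
  (forall f g, {in s, f =1 g} -> F f -> F g) -> measurable [set t | F (xi^~ t)].
Proof.
elim: s F => [|a s IH] F Floc.
  have [F0|nF0] := pselect (F (fun=> 0%N)).
    rewrite [X in measurable X](_ : _ = setT) //.
    by apply/seteqP; split=> t // _; apply: Floc F0.
  rewrite [X in measurable X](_ : _ = set0) //.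
  by apply/seteqP; split=> t //= Ft; apply: nF0; apply: Floc Ft.
pose Fa v f := F (fun i => if i == a then v else f i).
rewrite [X in measurable X](_ : _ = \bigcup_v (xi a @^-1` [set v] `&` [set t | Fa v (xi^~ t)])).
  apply: bigcupT_measurable => v; apply: measurableI => //.
  apply: IH => f g fg; apply: Floc => i; case: eqP => // /eqP ne.
  by rewrite inE (negbTE ne) => /fg.
apply/seteqP; split => t /=.
  by move=> Ft; exists (xi a t) => //; split => //; apply: Floc Ft => i _; case: eqP => [->|].
move=> [v _ [/= <-]]; apply: Floc => i _; case: eqP => [->|] //.
Qed.

Lemma le_measure_cover (E : set T) (l : seq witness) : measurable E ->
  E `<=` \bigcup_(W in [set` l]) cylinder W -> (P E <= \sum_(W <- l) P (cylinder W))%E.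
Proof.
move=> mE El; pose C k := cylinder (nth [::] l k).
rewrite (big_nth [::]) big_mkord; apply: (@content_subadditive _ _ _ P _ C) => //.
  by move=> k _; apply: measurable_cylinder.
move=> t /El [W /= Wl Wt]; rewrite -(bigcup_mkord _ C).
by exists (index W l); rewrite /= ?index_mem // /C nth_index.
Qed.

Variable rho : R.
Hypothesis xi_indep : forall (s : seq int) (A : int -> set nat), uniq s ->
  P (\bigcap_(i in [set` s]) (xi i @^-1` A i)) = (\prod_(i <- s) P (xi i @^-1` A i))%E.
Hypothesis xi_tail : forall (i : int) (n : nat), P [set t | (n <= xi i t)%N] = (rho ^+ n)%:E.

Lemma probability_cylinder W : uniq (unzip1 W) -> P (cylinder W) = (weight rho W)%:E.
Proof.
move=> uW; set s := map Posz (unzip1 W).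
have us : uniq s by rewrite map_inj_uniq //; move=> ? ? [].
rewrite [cylinder W](_ : _ = \bigcap_(i in [set` s]) xi i @^-1` [set n | (threshold W i <= n)%N]).
  rewrite xi_indep // !big_map -prodEFin; apply: eq_big_seq => p pW.
  by rewrite thresholdE // xi_tail.
apply/seteqP; split => t.
  by move=> /allP Wt _ /mapP [_ /mapP [p pW ->] ->] /=; rewrite thresholdE //; apply: Wt.
move=> Wt; apply/allP => p pW; rewrite -(thresholdE uW pW).
by apply: Wt; rewrite /= map_f // map_f.
Qed.

End Cylinders.

Definition children (Lb j : nat) : seq nat := iota (j * Lb) Lb.

Definition ancestor (Lb k i : nat) : nat := i %/ Lb ^ k.

Lemma ancestor0 Lb i : ancestor Lb 0 i = i.
Proof. by rewrite /ancestor expn0 divn1. Qed.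

Lemma ancestorS Lb k i j :
  ancestor Lb k i \in children Lb j -> ancestor Lb k.+1 i = j.
Proof.
rewrite /ancestor expnSr divnMA mem_iota => /andP [lo hi].
have Lb0 : (0 < Lb)%N by move: (leq_ltn_trans lo hi); rewrite -ltn_subLR ?subnn.
by rewrite -(subnKC lo) divnMDl // divn_small ?addn0 // ltn_subLR.
Qed.

Definition node_HB (k : nat) (bad : seq (int * nat)) : int * nat :=
  let H : int :=
    match bad with
    | [::] => 0
    | [:: c] => c.1 - 1
    | _ => 1 + \sum_(c <- bad) c.1
    end in
  (H, if H == 0 then 0%N else if bad is [:: c] then c.2 else k.+1).

Section Hierarchy.
Variables (Lb : nat) (f : int -> nat).

Definition bad_children (k j : nat) : seq nat :=
  [seq c <- children Lb j | Hval Lb f k (Posz c) != 0].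

Lemma HB_succ k j :
  HB Lb f k.+1 (Posz j) = node_HB k [seq HB Lb f k (Posz c) | c <- bad_children k j].
Proof.
rewrite /=.
have -> : [seq HB Lb f k (Posz j * Posz Lb + Posz c) | c <- iota 0 Lb] =
          [seq HB Lb f k (Posz c) | c <- children Lb j].
  rewrite /children -[(j * Lb)%N]addn0 iotaDl -map_comp.
  by apply: eq_map => c /=; rewrite PoszD PoszM.
by rewrite filter_map.
Qed.

Lemma Hval_ge0 k i : 0 <= Hval Lb f k i.
Proof.
elim: k i => [//|k IH] i; rewrite /Hval /=.
set bad := [seq _ <- _ | _].
have bad_gt0 c : c \in bad -> 0 < c.1.
  rewrite mem_filter => /andP [nz /mapP [x _ cx]].
  by rewrite cx in nz *; rewrite lt_def nz IH.
case E: bad => [|c [|c' r]] //.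
  by rewrite subr_ge0; apply: bad_gt0; rewrite E mem_head.
rewrite addr_ge0 // big_seq sumr_ge0 // => x xbad.
by apply/ltW/bad_gt0; rewrite E.
Qed.

Lemma Bval_le k i : (Bval Lb f k i <= k)%N.
Proof.
elim: k i => [//|k IH] i; rewrite /Bval /=.
set bad := [seq _ <- _ | _]; case: ifP => // _.
case E: bad => [|c [|c' r]] //.
have : c \in bad by rewrite E mem_head.
by rewrite mem_filter => /andP [_ /mapP [x _ ->]]; apply/leqW/IH.
Qed.

Lemma HB_succ_one k j c : bad_children k j = [:: c] ->
  HB Lb f k.+1 (Posz j) =
  let H := Hval Lb f k (Posz c) - 1 in (H, if H == 0 then 0%N else Bval Lb f k (Posz c)).
Proof. by move=> E; rewrite HB_succ E. Qed.

Lemma HB_succ_many k j : (1 < size (bad_children k j))%N ->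
  HB Lb f k.+1 (Posz j) = (1 + \sum_(c <- children Lb j) Hval Lb f k (Posz c), k.+1).
Proof.
have -> : \sum_(c <- children Lb j) Hval Lb f k (Posz c) =
          \sum_(v <- [seq HB Lb f k (Posz c) | c <- bad_children k j]) v.1.
  rewrite big_map big_filter [RHS]big_mkcond /=.
  by apply: eq_bigr => c _; case: eqP.
have : 0 <= \sum_(v <- [seq HB Lb f k (Posz c) | c <- bad_children k j]) v.1.
  by rewrite big_map sumr_ge0 // => c _; apply: Hval_ge0.
rewrite HB_succ; case: (bad_children k j) => [|c [|c' r]] //= sum_ge0 _.
by rewrite /node_HB gt_eqF // ltr_pwDl.
Qed.

End Hierarchy.

Lemma eq_HB Lb f g k j :
  (forall i, ancestor Lb k i = j -> f (Posz i) = g (Posz i)) ->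
  HB Lb f k (Posz j) = HB Lb g k (Posz j).
Proof.
elim: k j => [|k IH] j fg; first by rewrite /= fg ?ancestor0.
have eq_child c : c \in children Lb j -> HB Lb f k (Posz c) = HB Lb g k (Posz c).
  by move=> cj; apply: IH => i ic; apply: fg; rewrite -ic in cj; apply: ancestorS.
rewrite !HB_succ.
have -> : bad_children Lb g k j = bad_children Lb f k j.
  by apply: eq_in_filter => c /eq_child; rewrite /Hval => ->.
congr node_HB; apply/eq_in_map => c.
by rewrite mem_filter => /andP [_ /eq_child].
Qed.

Lemma measurable_HB d (T : measurableType d) (xi : int -> T -> nat) Lb k j
    (Q : int * nat -> Prop) :
  (forall (i : int) (A : set nat), measurable (xi i @^-1` A)) -> (0 < Lb)%N ->
  measurable [set t | Q (HB Lb (xi^~ t) k (Posz j))].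
Proof.
move=> xi_meas Lb_gt0.
apply: (measurable_finitely_determined xi_meas (s := map Posz (iota 0 (j.+1 * Lb ^ k)))
  (F := fun f => Q (HB Lb f k (Posz j)))) => f g fg; rewrite (@eq_HB _ f g) // => i ij; apply: fg.
by rewrite map_f // mem_iota /= -ltn_divLR ?expn_gt0 ?Lb_gt0 // -/(ancestor _ _ _) ij.
Qed.

(* With F c g witnessing that child c has H = g, some_bad F cs s (resp. many_bad)
   witnesses that at least one (resp. two) of the children cs are bad and that
   their H-values sum to s. *)
Section BadChildren.
Variable F : nat -> nat -> seq witness.

Definition joins (c : nat) (S : nat -> seq witness) (s : nat) : seq witness :=
  flatten [seq [seq W ++ W' | W <- F c g, W' <- S (s - g)%N] | g <- iota 1 s].

Fixpoint some_bad (cs : seq nat) (s : nat) : seq witness :=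
  if cs is c :: cs' then F c s ++ some_bad cs' s ++ joins c (some_bad cs') s else [::].

Fixpoint many_bad (cs : seq nat) (s : nat) : seq witness :=
  if cs is c :: cs' then many_bad cs' s ++ joins c (some_bad cs') s else [::].

Lemma mem_joins c S s g W W' : (0 < g <= s)%N ->
  W \in F c g -> W' \in S (s - g)%N -> W ++ W' \in joins c S s.
Proof.
move=> /andP [g0 gs] WF W'S; apply/flattenP; exists [seq W ++ W' | W <- F c g, W' <- S (s - g)%N].
  by apply: map_f; rewrite mem_iota g0 add1n ltnS.
exact: allpairs_f.
Qed.

Lemma many_bad_sub cs s : {subset many_bad cs s <= some_bad cs s}.
Proof.
elim: cs => [//|c cs IH] W /=; rewrite !mem_cat => /orP [/IH ->|->]; by rewrite !orbT.
Qed.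

Section Completeness.
Variables (Q : pred witness) (g : nat -> nat).
Hypothesis F_complete : forall c, (0 < g c)%N -> exists2 W, W \in F c (g c) & Q W.
Hypothesis Q_cat : forall W W', Q W -> Q W' -> Q (W ++ W').

Let bad c := (0 < g c)%N.

Lemma joins_complete c S cs : bad c ->
  (exists2 W', W' \in S (\sum_(c' <- cs) g c')%N & Q W') ->
  exists2 W, W \in joins c S (\sum_(c' <- c :: cs) g c')%N & Q W.
Proof.
move=> gc [W' W'S QW']; have [W WF QW] := F_complete gc.
exists (W ++ W'); last exact: Q_cat.
apply: (mem_joins _ WF); last by rewrite big_cons addKn.
by rewrite big_cons leq_addr andbT.
Qed.

Lemma some_bad_complete cs : has bad cs ->
  exists2 W, W \in some_bad cs (\sum_(c <- cs) g c)%N & Q W.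
Proof.
elim: cs => [//|c cs IH] /=.
have [gc|] := ltnP 0 (g c); last first.
  rewrite leqn0 => /eqP gc; rewrite /bad gc big_cons gc add0n => /IH [W WS QW].
  by exists W; rewrite // !mem_cat WS orbT.
case: (boolP (has bad cs)) => [/IH csW _|nbad _].
  by have [W WJ QW] := joins_complete gc csW; exists W; rewrite // !mem_cat WJ !orbT.
have -> : (\sum_(c' <- c :: cs) g c')%N = g c.
  rewrite big_cons -[RHS]addn0; congr addn; apply/eqP; rewrite sum_nat_seq_eq0.
  by apply/allP => c' /(hasPn nbad); rewrite /bad -leqNgt leqn0.
by have [W WF QW] := F_complete gc; exists W; rewrite // mem_cat WF.
Qed.

Lemma many_bad_complete cs : (1 < count bad cs)%N ->
  exists2 W, W \in many_bad cs (\sum_(c <- cs) g c)%N & Q W.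
Proof.
elim: cs => [//|c cs IH] /=; case: (boolP (bad c)) => [gc|ngc] /=.
  rewrite add1n ltnS -has_count => /some_bad_complete csW.
  by have [W WJ QW] := joins_complete gc csW; exists W; rewrite // mem_cat WJ orbT.
rewrite add0n big_cons => /IH [W WM QW]; exists W => //.
by move: ngc; rewrite /bad -leqNgt leqn0 => /eqP ->; rewrite add0n mem_cat WM.
Qed.

End Completeness.

Section Support.
Variable own : nat -> nat.
Hypothesis F_supp : forall c g W, W \in F c g ->
  uniq (unzip1 W) && all (fun p => own p.1 == c) W.

Lemma some_bad_supp cs s W : uniq cs -> W \in some_bad cs s ->
  uniq (unzip1 W) && all (fun p => own p.1 \in cs) W.
Proof.
elim: cs s W => [//|c cs IH] s W /= /andP [ncs ucs].
rewrite !mem_cat => /orP [WF|/orP [/(IH _ _ ucs) /andP [-> Wcs]|]].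
- have /andP [-> /allP Wc] := F_supp WF.
  by apply/allP => p pW; rewrite (eqP (Wc p pW)) mem_head.
- by apply: sub_all Wcs => p; rewrite inE orbC => ->.
move=> /flattenP [_ /mapP [g _ ->]] /allpairsP [[W1 W2] [/= /F_supp /andP [u1 /allP a1]]].
move=> /(IH _ _ ucs) /andP [u2 /allP a2] ->.
rewrite [unzip1 _]map_cat cat_uniq u1 u2 andbT all_cat; apply/and3P; split.
+ apply/hasPn => _ /mapP [p pW2 ->]; apply/negP => /mapP [q qW1 qp].
  by move: ncs; rewrite -(eqP (a1 q qW1)) -qp a2.
+ by apply/allP => p pW; rewrite (eqP (a1 p pW)) mem_head.
+ by apply/allP => p pW; rewrite inE a2 ?orbT.
Qed.
End Support.

End BadChildren.

(* Witnesses for H_(k,j) = h and B_(k,j) = b: for b < k the node has a single bad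
   child, with H = h + 1 and the same B; for b = k it has several, whose H-values
   sum to h - 1 and whose B is anything up to k - 1. *)
Fixpoint witnesses (Lb k j h b : nat) : seq witness :=
  if h == 0%N then [::] else
  match k with
  | 0 => if b == 0%N then [:: [:: (j, h)]] else [::]
  | k'.+1 =>
      if (b <= k')%N then flatten [seq witnesses Lb k' c h.+1 b | c <- children Lb j]
      else if b == k'.+1 then
        many_bad (fun c g => flatten [seq witnesses Lb k' c g b' | b' <- iota 0 k'.+1])
          (children Lb j) h.-1
      else [::]
  end.

Definition child_witnesses (Lb k c g : nat) : seq witness :=
  flatten [seq witnesses Lb k c g b' | b' <- iota 0 k.+1].

Lemma witnessesS Lb k j h b : witnesses Lb k.+1 j h.+1 b =
  if (b <= k)%N then flatten [seq witnesses Lb k c h.+2 b | c <- children Lb j]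
  else if b == k.+1 then many_bad (child_witnesses Lb k) (children Lb j) h
  else [::].
Proof. by []. Qed.

Lemma witnesses_supp Lb k j h b W : W \in witnesses Lb k j h b ->
  uniq (unzip1 W) && all (fun p => ancestor Lb k p.1 == j) W.
Proof.
elim: k j h b W => [|k IH] j [//|h] b W.
  by rewrite /=; case: eqP => // _; rewrite inE => /eqP -> /=; rewrite ancestor0 eqxx.
have up (W0 : witness) c : c \in children Lb j -> all (fun p => ancestor Lb k p.1 == c) W0 ->
    all (fun p => ancestor Lb k.+1 p.1 == j) W0.
  by move=> cj; apply: sub_all => p /eqP pc; rewrite (ancestorS (j := j)) // pc.
rewrite witnessesS; case: ifP => _.
  by move=> /flattenP [_ /mapP [c cj ->]] /IH /andP [-> /(up _ _ cj)].
case: ifP => // _ /many_bad_sub WS.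
have child_supp c g W0 : W0 \in child_witnesses Lb k c g ->
    uniq (unzip1 W0) && all (fun p => ancestor Lb k p.1 == c) W0.
  by move=> /flattenP [_ /mapP [b' _ ->]] /IH.
have /andP [-> Wj] := some_bad_supp child_supp (iota_uniq _ _) WS.
by apply: sub_all Wj => p /ancestorS ->.
Qed.

Lemma witnesses_complete Lb f k j h : (0 < h)%N -> Hval Lb f k (Posz j) = Posz h ->
  exists2 W, W \in witnesses Lb k j h (Bval Lb f k (Posz j)) & exceeds f W.
Proof.
elim: k j h => [|k IH] j [//|h] _.
  by rewrite /Hval /= => -[fj]; exists [:: (j, h.+1)]; rewrite ?mem_head //= fj andbT.
have bad_sub : {subset bad_children Lb f k j <= children Lb j}.
  by move=> c; rewrite mem_filter => /andP [].
rewrite witnessesS; case E: (bad_children Lb f k j) => [|c [|c1 r]].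
- by rewrite /Hval HB_succ E.
- rewrite /Hval /Bval (HB_succ_one E) /= => Hh; rewrite Hh /= Bval_le.
  have Hc : Hval Lb f k (Posz c) = Posz h.+2 by rewrite -(subrK 1 (Hval _ _ _ _)) Hh addrC -intS.
  have [W WW fW] := IH c h.+2 isT Hc; exists W => //.
  apply/flattenP; exists (witnesses Lb k c h.+2 (Bval Lb f k (Posz c))) => //.
  by apply/mapP; exists c; rewrite // bad_sub // E mem_head.
have many : (1 < size (bad_children Lb f k j))%N by rewrite E.
clear c c1 r E.
rewrite /Hval /Bval (HB_succ_many many) /= ltnn eqxx => -[Hh].
pose g c := `|Hval Lb f k (Posz c)|%N.
have Hg c : Hval Lb f k (Posz c) = Posz (g c) by rewrite /g gez0_abs // Hval_ge0.
have sumH : \sum_(c <- children Lb j) Hval Lb f k (Posz c) = Posz h.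
  by apply: (addrI 1); rewrite Hh intS.
have -> : h = (\sum_(c <- children Lb j) g c)%N.
  apply/eqP; rewrite -eqz_nat -sumH (big_morph Posz PoszD (erefl 0%Z)).
  by apply/eqP/eq_bigr => c _.
apply: many_bad_complete => [c gc|W W' fW fW'|].
- have [W WW fW] := IH c (g c) gc (Hg c); exists W => //.
  apply/flattenP; exists (witnesses Lb k c (g c) (Bval Lb f k (Posz c))) => //.
  by rewrite map_f // mem_iota ltnS Bval_le.
- by rewrite exceeds_cat fW.
- rewrite -(eq_count (a1 := fun c => Hval Lb f k (Posz c) != 0)); first by rewrite -size_filter.
  by move=> c /=; rewrite /g absz_gt0.
Qed.

Definition mass {R : pzSemiRingType} (rho : R) (l : seq witness) : R :=
  \sum_(W <- l) weight rho W.

Section Mass.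
Variables (R : realFieldType) (rho : R).
Hypothesis rho_ge0 : 0 <= rho.

Lemma mass_ge0 l : 0 <= mass rho l.
Proof. by apply: sumr_ge0 => W _; apply: prodr_ge0 => p _; apply: exprn_ge0. Qed.

Lemma mass_cat l l' : mass rho (l ++ l') = mass rho l + mass rho l'.
Proof. exact: big_cat. Qed.

Lemma mass_flatten ls : mass rho (flatten ls) = \sum_(l <- ls) mass rho l.
Proof. exact: big_flatten. Qed.

Lemma mass_allpairs_cat l l' :
  mass rho [seq W ++ W' | W <- l, W' <- l'] = mass rho l * mass rho l'.
Proof.
rewrite /mass big_allpairs_dep mulr_suml; apply: eq_bigr => W _.
by rewrite mulr_sumr; apply: eq_bigr => W' _; rewrite /weight big_cat.
Qed.

End Mass.

Lemma sum_geometric_convolution (R : realFieldType) (al be : R) s :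
  0 <= al < be ->
  \sum_(g <- iota 1 s) al ^+ g * be ^+ (s - g) <= al / (be - al) * be ^+ s.
Proof.
move=> /andP [al0 albe]; have ba0 : 0 < be - al by rewrite subr_gt0.
have -> : \sum_(g <- iota 1 s) al ^+ g * be ^+ (s - g) = al * ((be ^+ s - al ^+ s) / (be - al)).
  rewrite subrXX mulrAC divff ?gt_eqF // mul1r mulr_sumr (iotaDl 1 0) big_map.
  rewrite -(big_mkord xpredT (fun i => al * (be ^+ (s.-1 - i) * al ^+ i))) /index_iota subn0.
  apply: eq_big_seq => i; rewrite mem_iota add0n => /= lis.
  by rewrite add1n exprS -subn1 -subnDA add1n [be ^+ _ * _]mulrC mulrA.
rewrite mulrA [_ / _ * _]mulrAC ler_pM2r ?invr_gt0 //.
by apply: ler_wpM2l => //; rewrite gerBl exprn_ge0.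
Qed.

Section BadChildrenMass.
Variables (R : realFieldType) (rho x al be : R) (F : nat -> nat -> seq witness).
Hypotheses (rho_ge0 : 0 <= rho) (x_ge0 : 0 <= x) (al_ge0 : 0 <= al) (al_lt_be : al < be).
Hypothesis F_mass : forall c g, mass rho (F c g) <= x * al ^+ g.

Let D := al / (be - al).

Let D_ge0 : 0 <= D.
Proof. by rewrite divr_ge0 // subr_ge0 ltW. Qed.

Let be_ge0 : 0 <= be.
Proof. exact: le_trans (ltW al_lt_be). Qed.

Lemma mass_joins_le c S A s : 0 <= A -> (forall t, mass rho (S t) <= A * be ^+ t) ->
  mass rho (joins F c S s) <= x * A * D * be ^+ s.
Proof.
move=> A_ge0 S_mass; rewrite /joins mass_flatten big_map.
apply: (@le_trans _ _ (\sum_(g <- iota 1 s) x * A * (al ^+ g * be ^+ (s - g)))).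
  apply: ler_sum => g _; rewrite mass_allpairs_cat mulrACA.
  by apply: ler_pM; rewrite ?mass_ge0.
rewrite -mulr_sumr -(mulrA (x * A)); apply: ler_wpM2l; first exact: mulr_ge0.
by apply: sum_geometric_convolution; rewrite al_ge0.
Qed.
Lemma mass_some_bad_le cs s : 2 * (size cs)%:R * x * D <= 1 ->
  mass rho (some_bad F cs s) <= 2 * (size cs)%:R * x * be ^+ s.
Proof.
elim: cs s => [|c cs IH] s /=; first by rewrite /mass big_nil !mulr_ge0 ?exprn_ge0 ?ler0n.
rewrite -[(size cs).+1%:R]natr1; set n : R := (size cs)%:R => small.
have n_ge0 : 0 <= n by apply: ler0n.
have small' : 2 * n * x * D <= 1 by have := mulr_ge0 x_ge0 D_ge0; nra.
have B_ge0 : 0 <= x * be ^+ s by rewrite mulr_ge0 ?exprn_ge0.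
have F_le : mass rho (F c s) <= x * be ^+ s.
  apply: le_trans (F_mass c s) _; apply: ler_wpM2l => //.
  by rewrite lerXn2r ?nnegrE // ltW.
have J_le : mass rho (joins F c (some_bad F cs) s) <= x * be ^+ s.
  apply: le_trans (mass_joins_le _ _ _ (IH^~ small')) _; first by rewrite !mulr_ge0.
  rewrite (_ : _ * _ * _ * _ = (2 * n * x * D) * (x * be ^+ s)); last by ring.
  exact: ler_piMl.
rewrite !mass_cat; have := IH s small'; nra.
Qed.

Lemma mass_many_bad_le cs s : 2 * (size cs)%:R * x * D <= 1 ->
  mass rho (many_bad F cs s) <= (size cs)%:R ^+ 2 * x ^+ 2 * D * be ^+ s.
Proof.
elim: cs s => [|c cs IH] s.
  move=> _; rewrite [many_bad _ _ _]/= /mass big_nil.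
  by apply: mulr_ge0 (exprn_ge0 _ be_ge0); apply: mulr_ge0 D_ge0; rewrite mulr_ge0 ?exprn_ge0.
rewrite /= -[(size cs).+1%:R]natr1; set n : R := (size cs)%:R => small.
have n_ge0 : 0 <= n by apply: ler0n.
have small' : 2 * n * x * D <= 1 by have := mulr_ge0 x_ge0 D_ge0; nra.
have Y_ge0 : 0 <= x ^+ 2 * D * be ^+ s.
  by rewrite mulr_ge0 ?exprn_ge0 // mulr_ge0 ?exprn_ge0 ?D_ge0.
have A_ge0 : 0 <= 2 * n * x by rewrite !mulr_ge0.
have := mass_joins_le c s A_ge0 (fun t => mass_some_bad_le t small').
rewrite mass_cat; have := IH s small'; lra.
Qed.

End BadChildrenMass.

Lemma expR1_le4 (R : realType) : expR (1 : R) <= 4.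
Proof.
have half : (1 / 2 : R) <= expR (- (1 / 2)) by apply: le_trans (expR_ge1Dx _); lra.
have inv : expR (1 / 2 : R) * expR (- (1 / 2)) = 1 by rewrite -expRD subrr expR0.
have -> : (1 : R) = 1 / 2 + 1 / 2 by lra.
by rewrite expRD; have := expR_ge0 (1 / 2 : R); nra.
Qed.

Lemma ler1D_powR (R : realType) (a y : R) : expR 1 <= a -> 0 <= y -> 1 + y <= a `^ y.
Proof.
move=> ea y_ge0; have a_ge0 := le_trans (expR_ge0 1) ea.
apply: le_trans (expR_ge1Dx y) _.
have -> : expR y = expR 1 `^ y by rewrite /powR gt_eqF ?expR_gt0 // expRK mulr1.
by apply: (@ge0_ler_powR R y y_ge0) ea; rewrite nnegrE ?expR_ge0.
Qed.

Lemma gt0_powRD (R : realType) (a r s : R) : 0 < a -> a `^ (r + s) = a `^ r * a `^ s.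
Proof. by move=> a_gt0; rewrite powRD // (gt_eqF a_gt0) implybT. Qed.

Lemma powR_exprn (R : realType) (a r : R) n : 0 <= a -> (a `^ r) ^+ n = a `^ (r * n%:R).
Proof. by move=> a_ge0; rewrite -powR_mulrn ?powR_ge0 // -powRrM. Qed.

Lemma poly_le_exp16 k : (k.+1 ^ 3 * k.+2 <= 16 ^ k.+2)%N.
Proof.
apply: (@leq_trans (k.+2 ^ 4)).
  by rewrite (expnS k.+2 3) mulnC leq_mul2l leq_exp2r // leqnSn orbT.
by rewrite -[16%N]/(2 ^ 4)%N -expnM mulnC expnM leq_exp2r // ltnW // ltn_expl.
Qed.

Definition tail_bound {R : realType} (L : R) (k h b : nat) : R :=
  L `^ (- (k%:R + h%:R / b.+1%:R) - 2 * h%:R - 13).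

Section WitnessMass.
Variables (R : realType) (Lb : nat) (rho : R).
Hypotheses (Lb_ge16 : (16 <= Lb)%N) (rho_ge0 : 0 <= rho).
Local Notation L := (Lb%:R : R).

Let L_ge16 : 16 <= L. Proof. by rewrite (ler_nat R 16). Qed.
Let L_gt0 : 0 < L. Proof. by apply: lt_le_trans L_ge16; rewrite ltr0n. Qed.
Let L_ge1 : 1 <= L. Proof. by apply: le_trans L_ge16; rewrite ler1n. Qed.

Lemma le_tail_bound k h b b' : (b <= b')%N -> tail_bound L k h b <= tail_bound L k h b'.
Proof.
move=> bb'; apply: (ler_powR L_ge1).
have : h%:R / b'.+1%:R <= h%:R / b.+1%:R :> R.
  by apply: ler_wpM2l; rewrite ?lef_pV2 ?posrE ?ltr0Sn ?ler_nat.
by rewrite !lerD2r lerN2 lerD2l.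
Qed.

Lemma tail_bound_succ_le k h b : L * tail_bound L k h.+1 b <= tail_bound L k.+1 h b.
Proof.
rewrite /tail_bound -{1}(powRr1 (ltW L_gt0)) -gt0_powRD //; apply: (ler_powR L_ge1).
rewrite -[k.+1%:R]natr1 -[h.+1%:R]natr1 mulrDl.
have : 0 <= 1 / b.+1%:R :> R by rewrite divr_ge0 ?ler0n.
move: (h%:R / _) (1 / _) => A B; lra.
Qed.

Lemma exprn_le_tail_bound h : rho <= L `^ (-16) -> rho ^+ h.+1 <= tail_bound L 0 h.+1 0.
Proof.
move=> rho_small; have rhoX : rho ^+ h.+1 <= (L `^ (-16)) ^+ h.+1.
  by rewrite ler_pXn2r ?nnegrE ?powR_ge0.
apply: (le_trans rhoX); rewrite powR_exprn ?(ltW L_gt0) // /tail_bound.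
apply: (ler_powR L_ge1); have : 1 <= h.+1%:R :> R by rewrite ler1n.
rewrite divr1; lra.
Qed.

Section ManyBadChildren.
Variable k : nat.
Hypothesis IH : forall j h b, mass rho (witnesses Lb k j h b) <= tail_bound L k h b.
Local Notation K := (k%:R : R).

(* A child with H = g has mass at most x * al ^+ g.  The ratio be / al = 1 + 1/D
   makes the geometric convolution cost a factor D = al / (be - al), while
   be ^+ h <= al ^+ h * L `^ (h / D) and 1/(K + 1) - 1/D = 1/(K + 2). *)
Let x := (K + 1) * L `^ (- K - 13).
Let al := L `^ (- (2 + (K + 1)^-1)).
Let D := (K + 1) * (K + 2).
Let be := al * (1 + D^-1).

Let x_ge0 : 0 <= x. Proof. by rewrite mulr_ge0 ?powR_ge0 // addr_ge0. Qed.
Let al_gt0 : 0 < al. Proof. exact: powR_gt0. Qed.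
Let D_gt0 : 0 < D. Proof. by rewrite mulr_gt0 // ltr_wpDl. Qed.
Let al_lt_be : al < be. Proof. by rewrite ltr_pMr // ltrDl invr_gt0. Qed.

Let poly : (K + 1) ^+ 3 * (K + 2) <= L `^ (K + 2).
Proof.
have -> : L `^ (K + 2) = L ^+ k.+2.
  by rewrite -powR_mulrn ?(ltW L_gt0) // -[k.+2%:R]natr1 -[k.+1%:R]natr1 -addrA.
apply: le_trans (_ : (16 ^ k.+2)%:R <= _); last first.
  by rewrite natrX; apply: lerXn2r; rewrite ?nnegrE ?ler0n ?(ltW L_gt0).
have -> : K + 2 = k.+2%:R by rewrite -[k.+2%:R]natr1 -[k.+1%:R]natr1 -addrA.
by rewrite natr1 -natrX -natrM ler_nat poly_le_exp16.
Qed.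

Let mass_child c g : mass rho (child_witnesses Lb k c g) <= x * al ^+ g.
Proof.
rewrite /child_witnesses mass_flatten big_map.
apply: le_trans (_ : _ <= \sum_(b <- iota 0 k.+1) tail_bound L k g k) _.
  rewrite big_seq [X in _ <= X]big_seq; apply: ler_sum => b; rewrite mem_iota => /andP [_ bk].
  by apply: le_trans (IH _ _ _) (le_tail_bound _ _ _).
rewrite big_const_seq count_predT size_iota iter_addr_0 -(mulr_natl (tail_bound _ _ _ _)).
rewrite -[k.+1%:R]natr1 /x -mulrA; apply: ler_wpM2l; first exact: addr_ge0.
rewrite /al powR_exprn ?(ltW L_gt0) // -gt0_powRD // /tail_bound -[k.+1%:R]natr1.
have -> : - K - 13 + - (2 + (K + 1)^-1) * g%:R = - (K + g%:R / (K + 1)) - 2 * g%:R - 13.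
  by ring.
by [].
Qed.

Let ratio : al / (be - al) = D.
Proof.
rewrite /be; field; have -> : al * (D + 1) + - al * D = al by ring.
by rewrite !gt_eqF.
Qed.

Let small : 2 * L * x * D <= 1.
Proof.
have two_le : 2 <= L `^ 1.
  by rewrite powRr1 ?(ltW L_gt0) //; apply: le_trans L_ge16; rewrite ler_nat.
have poly2 : (K + 1) ^+ 2 * (K + 2) <= L `^ (K + 2).
  apply: le_trans poly; apply: ler_wpM2r; first by rewrite addr_ge0.
  by rewrite [_ ^+ 3]exprS ler_peMl ?exprn_ge0 ?addr_ge0 // lerDr.
have -> : 2 * L * x * D = 2 * ((K + 1) ^+ 2 * (K + 2)) * L `^ (1 + (- K - 13)).
  by rewrite gt0_powRD // powRr1 ?(ltW L_gt0) // /x /D; ring.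
apply: le_trans (_ : _ <= L `^ 1 * L `^ (K + 2) * L `^ (1 + (- K - 13))) _.
  apply: ler_wpM2r; first exact: powR_ge0.
  by apply: ler_pM => //; rewrite mulr_ge0 ?exprn_ge0 ?addr_ge0.
rewrite -!gt0_powRD // -[X in _ <= X](powRr0 L); apply: (ler_powR L_ge1); lra.
Qed.

Let final h : L ^+ 2 * x ^+ 2 * D * be ^+ h <= tail_bound L k.+1 h.+1 k.+1.
Proof.
have grow : 1 + D^-1 <= L `^ D^-1.
  apply: ler1D_powR; last by rewrite invr_ge0 ltW.
  by apply: le_trans (expR1_le4 R) _; apply: le_trans L_ge16; rewrite ler_nat.
have be_le : be ^+ h <= al ^+ h * L `^ (D^-1 * h%:R).
  rewrite /be exprMn -powR_exprn ?(ltW L_gt0) //.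
  apply: ler_wpM2l; first by rewrite exprn_ge0 ?ltW.
  by apply: lerXn2r grow; rewrite nnegrE ?powR_ge0 // addr_ge0 // invr_ge0 (ltW D_gt0).
apply: le_trans (_ : _ <= L ^+ 2 * x ^+ 2 * D * (al ^+ h * L `^ (D^-1 * h%:R))) _.
  by apply: ler_wpM2l be_le; rewrite !mulr_ge0 ?exprn_ge0 ?(ltW L_gt0) ?(ltW D_gt0).
have -> : L ^+ 2 * x ^+ 2 * D * (al ^+ h * L `^ (D^-1 * h%:R)) = ((K + 1) ^+ 3 * (K + 2)) *
    L `^ (2 + (- K - 13) * 2 + - (2 + (K + 1)^-1) * h%:R + D^-1 * h%:R).
  rewrite /x /al exprMn !powR_exprn ?(ltW L_gt0) // -[L ^+ 2]powR_mulrn ?(ltW L_gt0) //.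
  by rewrite !gt0_powRD // /D; ring.
apply: le_trans (ler_wpM2r (powR_ge0 _ _) poly) _.
rewrite -gt0_powRD // /tail_bound; apply: (ler_powR L_ge1).
rewrite -[k.+2%:R]natr1 -[k.+1%:R]natr1 -[h.+1%:R]natr1 -subr_ge0.
have -> : - (K + 1 + (h%:R + 1) / (K + 1 + 1)) - 2 * (h%:R + 1) - 13 -
    (K + 2 + (2 + (- K - 13) * 2 + - (2 + (K + 1)^-1) * h%:R + D^-1 * h%:R)) = 6 - (K + 2)^-1.
  by rewrite /D; field; rewrite !gt_eqF ?ltr_wpDl.
have : (K + 2)^-1 <= 1 by rewrite invf_le1 ?ler_wpDl ?ltr_wpDl.
lra.
Qed.

Lemma mass_many_bad_children_le j h :
  mass rho (many_bad (child_witnesses Lb k) (children Lb j) h) <= tail_bound L k.+1 h.+1 k.+1.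
Proof.
apply: le_trans (final h).
have := mass_many_bad_le rho_ge0 x_ge0 (ltW al_gt0) al_lt_be mass_child (cs := children Lb j) h.
by rewrite ratio size_iota; apply; exact: small.
Qed.

End ManyBadChildren.

Hypothesis rho_small : rho <= L `^ (-16).

Lemma mass_witnesses_le k j h b : mass rho (witnesses Lb k j h b) <= tail_bound L k h b.
Proof.
have nil_le k' h' b' : mass rho [::] <= tail_bound L k' h' b' by rewrite /mass big_nil powR_ge0.
elim: k j h b => [|k IH] j [|h] b; rewrite ?[witnesses _ _ _ 0 _]/= //.
  rewrite /=; case: eqP => [->|_] //.
  by rewrite /mass big_seq1 /weight big_seq1; apply: exprn_le_tail_bound.
rewrite witnessesS; case: ifP => _.
  apply: le_trans (tail_bound_succ_le k h.+1 b); rewrite mass_flatten big_map.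
  apply: le_trans (_ : _ <= \sum_(c <- children Lb j) tail_bound L k h.+2 b) _.
    by apply: ler_sum => c _; apply: IH.
  by rewrite big_const_seq count_predT size_iota iter_addr_0 -(mulr_natl (tail_bound _ _ _ _)).
by case: ifP => [/eqP ->|_] //; apply: mass_many_bad_children_le.
Qed.

End WitnessMass.

Theorem lemma3p2 (R : realType) (d : measure_display) (T : measurableType d)
  (P : probability T R) (rho : R) (xi : int -> T -> nat)
  (hrho : rho < (Lpar%:R : R) `^ (- 16))
  (hmeas : forall (i : int) (A : set nat), measurable (xi i @^-1` A))
  (hindep : forall (s : seq int) (A : int -> set nat), uniq s ->
     P (\bigcap_(i in [set` s]) (xi i @^-1` A i)) =
     (\prod_(i <- s) P (xi i @^-1` A i))%E)
  (hlaw : forall (i : int) (n : nat),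
     P [set t | (n <= xi i t)%N] = (rho ^+ n)%:E)
  (k h b : nat) (hh : (1 <= h)%N) :
  (P [set t | Hval Lpar (fun i => xi i t) k 0 = Posz h /\
              Bval Lpar (fun i => xi i t) k 0 = b] <=
   ((Lpar%:R : R) `^ (- (k%:R + h%:R / b.+1%:R) - 2 * h%:R - 13))%:E)%E.
Proof.
have rho_ge0 : 0 <= rho.
  have : (0 <= P [set t | (1 <= xi 0 t)%N])%E by apply: measure_ge0.
  by rewrite hlaw expr1 lee_fin.
have Lpar_ge16 : (16 <= Lpar)%N by rewrite (@leq_trans (10 ^ 2)) // leq_pexp2l.
apply: le_trans (le_measure_cover P hmeas (l := witnesses Lpar k 0 h b) _ _) _.
- apply: (measurable_HB k 0 (fun v => v.1 = Posz h /\ v.2 = b) hmeas).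
  exact: leq_trans Lpar_ge16.
- move=> t [Ht Bt]; have [W WW fW] := witnesses_complete hh Ht.
  by exists W; rewrite // -Bt.
rewrite (eq_big_seq (fun W => (weight rho W)%:E)) => [|W /witnesses_supp /andP [uW _]].
  by rewrite sumEFin lee_fin; apply: mass_witnesses_le => //; apply: ltW.
exact: probability_cylinder.
Qed.
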